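(* Let $c=\frac32\left((1+\sqrt2)^{1/3}-(1+\sqrt2)^{-1/3}\right)=0.8941\cdots$ and let $x$ be a real number with $-3<x<c$. (i) We have $$\sum_{k=1}^\infty\frac{((2x-3)^2k+2x^2+2x-3)x^{3k}}{(x-1)^k\binom{3k}k}=-2x^3\frac{x+7}{(x+3)^2}+\frac{8x^2(x-1)q(x)}{(x+3)^2\sqrt{(1-x)(3+x)}},$$ where $$q(x)=\begin{cases}\arctan\left(\frac x{x+2}\sqrt{\frac{3+x}{1-x}}\right)&\text{if}\ -2<x<1,\\ -\frac{\pi}2&\text{if}\ x=-2,\\ \arctan\left(\frac x{x+2}\sqrt{\frac{3+x}{1-x}}\right)-\pi&\text{if}\ -3<x<-2.\end{cases}$$ (ii) We have $$\sum_{k=0}^\infty\frac{(s(x)k+t(x))x^{3k}}{(x-1)^k\binom{3k}k}=12x^2(1-x)\log(1-x)-27(1-x)(x^2-6x+3),$$ where $$s(x)=(x+3)(2x-3)^2(x^2-12x+9)=4x^5-48x^4+9x^3+351x^2-567x+243$$ and $$t(x)=2x^5-48x^4+69x^3-189x^2+243x-81.$$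
   Context: $\arctan$ denotes the principal branch with values in $(-\pi/2,\pi/2)$; $\log$ is the natural logarithm. *)

From Stdlib Require Import Reals.
From Stdlib Require Binomial.
From Coquelicot Require Import Coquelicot.
Open Scope R_scope.

Definition binom (n k : nat) : R := Binomial.C n k.

Definition c_const : R :=
  3 / 2 * (Rpower (1 + sqrt 2) (1 / 3) - Rpower (1 + sqrt 2) (- (1 / 3))).

Definition q_fun (x : R) : R :=
  if Rlt_dec (-2) x then atan (x / (x + 2) * sqrt ((3 + x) / (1 - x)))
  else if Req_EM_T x (-2) then - (PI / 2)
  else atan (x / (x + 2) * sqrt ((3 + x) / (1 - x))) - PI.

Definition s_fun (x : R) : R := (x + 3) * (2 * x - 3) ^ 2 * (x ^ 2 - 12 * x + 9).
Definition t_fun (x : R) : R :=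
  2 * x ^ 5 - 48 * x ^ 4 + 69 * x ^ 3 - 189 * x ^ 2 + 243 * x - 81.

From Stdlib Require Import Reals Factorial Lra Lia Psatz.
From Coquelicot Require Import Coquelicot.
Open Scope R_scope.

(* Both identities are proved by creative telescoping in [x].  The summand of index [j + 1]
   is [c(x) g_j(x)] for an explicit [g_j] with [g_j' = Z_(j+1) - Z_j], where
   [Z_j(y) = G(y) (j+1) (2j+1) y^(3j) / ((y-1)^j C(3j,j))], and the claimed sum over the
   indices [k >= 1] is [c(x) F(x)] with [F' = -Z_0] and [F(0) = g_j(0) = 0].  Hence
   [F - sum_(j<=N) g_j] vanishes at 0 and has derivative [-Z_(N+1)], which tends to 0
   uniformly between 0 and [x]: [C(3j,j)] grows like [(27/4)^j] while
   [|y^3/(y-1)| <= |x|^3/(1-x) < 27/4], the last inequality being exactly [-3 < x < c]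
   since [c] is the real root of [4c^3 = 27(1-c)].  In (i),
   [q(x) = 3 atan (sqrt ((3+x)/(1-x))) - PI] by the triple-angle formula. *)

Lemma c_const_cubic : 4 * c_const ^ 3 = 27 * (1 - c_const).
Proof.
  unfold c_const.
  assert (Hs2 : sqrt 2 * sqrt 2 = 2) by (apply sqrt_sqrt; lra).
  assert (Hs0 : 0 < sqrt 2) by (apply sqrt_lt_R0; lra).
  set (a := Rpower (1 + sqrt 2) (1 / 3)).
  assert (Ha : 0 < a) by apply exp_pos.
  assert (Ha3 : a ^ 3 = 1 + sqrt 2).
  { unfold a. rewrite <- Rpower_pow by apply exp_pos.
    rewrite Rpower_mult. replace (1 / 3 * INR 3) with 1 by (simpl; field).
    apply Rpower_1. lra. }
  rewrite Rpower_Ropp. fold a.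
  assert (Hinv3 : (/ a) ^ 3 = sqrt 2 - 1).
  { rewrite pow_inv, Ha3. field_simplify_eq; nra. }
  replace (4 * (3 / 2 * (a - / a)) ^ 3)
    with (27 / 2 * (a ^ 3 - (/ a) ^ 3) - 81 / 2 * (a - / a)) by (field; lra).
  rewrite Ha3, Hinv3. field. lra.
Qed.

Lemma c_const_lt_1 : c_const < 1.
Proof.
  pose proof c_const_cubic.
  destruct (Rlt_le_dec c_const 1) as [|Hc]; [assumption|].
  assert (1 <= c_const ^ 3) by (replace 1 with (1 ^ 3) by ring; apply pow_incr; lra).
  lra.
Qed.

Lemma abs_cube_div_lt_27_4 x : -3 < x < c_const -> Rabs x ^ 3 / (1 - x) < 27 / 4.
Proof.
  intros Hx. pose proof c_const_cubic. pose proof c_const_lt_1.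
  apply (Rmult_lt_reg_r (4 * (1 - x))); [lra|].
  replace (Rabs x ^ 3 / (1 - x) * (4 * (1 - x))) with (4 * Rabs x ^ 3) by (field; lra).
  destruct (Rle_lt_dec 0 x).
  - rewrite Rabs_right by lra.
    assert (0 < (c_const - x) * (c_const * c_const + c_const * x + x * x))
      by (apply Rmult_lt_0_compat; nra).
    nra.
  - rewrite Rabs_left by lra. nra.
Qed.

Lemma binom_pos n k : 0 < binom n k.
Proof.
  unfold binom, Binomial.C.
  apply Rdiv_lt_0_compat; [|apply Rmult_lt_0_compat]; apply lt_0_INR, lt_O_fact.
Qed.

Lemma binom_3k_succ k :
  binom (3 * S k) (S k)
  = binom (3 * k) k * (3 * (3 * INR k + 1) * (3 * INR k + 2))
    / (2 * (INR k + 1) * (2 * INR k + 1)).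
Proof.
  unfold binom, Binomial.C.
  replace (3 * S k)%nat with (S (S (S (3 * k)))) by lia.
  replace (S (S (S (3 * k))) - S k)%nat with (S (S (3 * k - k))) by lia.
  rewrite !fact_simpl, !mult_INR.
  pose proof (lt_0_INR _ (lt_O_fact (3 * k))).
  pose proof (lt_0_INR _ (lt_O_fact (3 * k - k))).
  pose proof (lt_0_INR _ (lt_O_fact k)).
  pose proof (pos_INR k).
  rewrite !S_INR, minus_INR, mult_INR by lia. simpl (INR 3).
  field. repeat split; lra.
Qed.

Lemma is_lim_seq_shift_ratio a b :
  0 < b -> is_lim_seq (fun n => (INR n + a) / (INR n + b)) 1.
Proof.
  intros Hb.
  assert (Hinv : is_lim_seq (fun n => / (INR n + b)) 0).
  { apply (is_lim_seq_inv _ p_infty); [|discriminate].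
    apply (is_lim_seq_plus _ _ p_infty b);
      [apply is_lim_seq_INR | apply is_lim_seq_const | constructor]. }
  apply (is_lim_seq_ext (fun n => 1 + (a - b) * / (INR n + b))).
  - intros n. pose proof (pos_INR n). field. lra.
  - replace (Finite 1) with (Finite (1 + (a - b) * 0)) by (f_equal; ring).
    apply is_lim_seq_plus'; [apply is_lim_seq_const|].
    apply is_lim_seq_mult'; [apply is_lim_seq_const | exact Hinv].
Qed.

(* Ratio test: consecutive terms have ratio tending to [4 r / 27]. *)
Lemma is_lim_seq_sq_pow_div_binom3 r :
  0 < r < 27 / 4 -> is_lim_seq (fun N => (INR N + 1) ^ 2 * r ^ N / binom (3 * N) N) 0.
Proof.
  intros Hr.
  set (b := fun N => (INR N + 1) ^ 2 * r ^ N / binom (3 * N) N).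
  assert (Hb : forall N, 0 < b N).
  { intros N. pose proof (binom_pos (3 * N) N). pose proof (pos_INR N).
    apply Rdiv_lt_0_compat; [apply Rmult_lt_0_compat; [nra | apply pow_lt; lra] | lra]. }
  apply is_lim_seq_abs_0, ex_series_lim_0.
  apply (ex_series_DAlembert _ (4 * r / 27)); [lra | intros N; pose proof (Hb N); lra |].
  apply (is_lim_seq_ext (fun N => 4 * r / 27
    * ((INR N + 2) / (INR N + 1)) * ((INR N + 2) / (INR N + 1))
    * ((INR N + 1) / (INR N + 2 / 3)) * ((INR N + 1 / 2) / (INR N + 1 / 3)))).
  - intros N. pose proof (Hb N). pose proof (Hb (S N)). pose proof (pos_INR N).
    pose proof (binom_pos (3 * N) N). pose proof (pow_lt r N (proj1 Hr)).
    rewrite Rabs_right by (apply Rle_ge, Rlt_le, Rdiv_lt_0_compat; auto).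
    unfold b. rewrite binom_3k_succ, S_INR. simpl pow.
    field. repeat split; lra.
  - replace (Finite (4 * r / 27)) with (Finite (4 * r / 27 * 1 * 1 * 1 * 1)) by (f_equal; ring).
    repeat apply is_lim_seq_mult'; try apply is_lim_seq_const;
      apply is_lim_seq_shift_ratio; lra.
Qed.

Definition pow_ratio (m n : nat) (y : R) : R := y ^ m / (y - 1) ^ n.

Lemma is_derive_pow_ratio m n y :
  y <> 1 ->
  is_derive (pow_ratio (S m) (S n)) y
    (pow_ratio m (S (S n)) y * (INR (S m) * (y - 1) - INR (S n) * y)).
Proof.
  intros Hy. unfold pow_ratio.
  evar (d : R). replace (_ * _) with d; unfold d.
  - apply is_derive_div.
    + apply is_derive_pow, is_derive_id.
    + apply is_derive_pow, (is_derive_minus id (fun _ => 1));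
        [apply is_derive_id | apply is_derive_const].
    + apply pow_nonzero. lra.
  - cbn -[INR pow]. rewrite <- !tech_pow_Rmult.
    field. split; [apply pow_nonzero |]; lra.
Qed.

Lemma pow_ratio_3k k y : pow_ratio (3 * k) k y = (y ^ 3 / (y - 1)) ^ k.
Proof. unfold pow_ratio, Rdiv. rewrite Rpow_mult_distr, pow_inv, pow_mult. reflexivity. Qed.

Lemma abs_cube_div_le x y :
  x < 1 -> Rmin 0 x <= y <= Rmax 0 x -> Rabs y ^ 3 / (1 - y) <= Rabs x ^ 3 / (1 - x).
Proof.
  intros Hx Hy. unfold Rmin, Rmax in Hy.
  assert (y < 1) by (destruct (Rle_dec 0 x); lra).
  apply (Rmult_le_reg_r ((1 - y) * (1 - x))); [nra|].
  replace (Rabs y ^ 3 / (1 - y) * ((1 - y) * (1 - x))) with (Rabs y ^ 3 * (1 - x))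
    by (field; lra).
  replace (Rabs x ^ 3 / (1 - x) * ((1 - y) * (1 - x))) with (Rabs x ^ 3 * (1 - y))
    by (field; lra).
  destruct (Rle_dec 0 x).
  - rewrite !Rabs_right by lra.
    assert (y ^ 3 <= x ^ 3) by (apply pow_incr; lra).
    assert (0 <= y ^ 3) by (apply pow_le; lra).
    nra.
  - rewrite !Rabs_left1 by lra.
    assert ((- y) ^ 3 <= (- x) ^ 3) by (apply pow_incr; lra).
    assert (y * y * (x * y) <= x * x * (x * y)) by (apply Rmult_le_compat_r; nra).
    nra.
Qed.

Definition tail_weight (k : nat) (y : R) : R :=
  (INR k + 1) * (2 * INR k + 1) * pow_ratio (3 * k) k y / binom (3 * k) k.

Lemma tail_weight_0 y : tail_weight 0 y = 1.
Proof. unfold tail_weight, pow_ratio, binom, Binomial.C. simpl. field. Qed.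

Lemma tail_weight_bound x r N y :
  x < 1 -> Rabs x ^ 3 / (1 - x) <= r -> Rmin 0 x <= y <= Rmax 0 x ->
  Rabs (tail_weight N y) <= 2 * ((INR N + 1) ^ 2 * r ^ N / binom (3 * N) N).
Proof.
  intros Hx Hr Hy.
  assert (Hy1 : y < 1) by (unfold Rmin, Rmax in Hy; destruct (Rle_dec 0 x); lra).
  pose proof (binom_pos (3 * N) N). pose proof (pos_INR N).
  assert (Hratio : Rabs (pow_ratio (3 * N) N y) <= r ^ N).
  { rewrite pow_ratio_3k, <- RPow_abs. apply pow_incr. split; [apply Rabs_pos|].
    rewrite Rabs_div, <- RPow_abs, (Rabs_left (y - 1)) by lra.
    replace (- (y - 1)) with (1 - y) by ring.
    eapply Rle_trans; [apply (abs_cube_div_le x) | exact Hr]; assumption. }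
  unfold tail_weight. rewrite Rabs_div, Rabs_mult, (Rabs_right (binom _ _)) by lra.
  rewrite Rabs_right by (apply Rle_ge; nra).
  unfold Rdiv. rewrite <- Rmult_assoc.
  apply Rmult_le_compat_r; [apply Rlt_le, Rinv_0_lt_compat; lra|].
  replace (2 * ((INR N + 1) ^ 2 * r ^ N)) with (2 * (INR N + 1) ^ 2 * r ^ N) by ring.
  apply Rmult_le_compat; [nra | apply Rabs_pos | nra | exact Hratio].
Qed.

Lemma sum_n_telescope (u : nat -> R) N :
  sum_n (fun j => u (S j) - u j) N = u (S N) - u O.
Proof.
  induction N as [|N IH]; [rewrite sum_O; reflexivity|].
  rewrite sum_Sn, IH. unfold plus; simpl. ring.
Qed.

Lemma is_series_scal_ext (a b : nat -> R) (c l L : R) :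
  L = c * l -> (forall n, a n = c * b n) -> is_series b l -> is_series a L.
Proof.
  intros -> Hab Hb. apply (is_series_ext (fun n => c * b n)); [intros n; symmetry; apply Hab|].
  exact (is_series_scal_l c b l Hb).
Qed.

Lemma is_series_cons (a : nat -> R) (l L : R) :
  L = a O + l -> is_series (fun k => a (S k)) l -> is_series a L.
Proof.
  intros -> H. apply is_series_decr_1.
  change (plus (a O + l) (opp (a O))) with (a O + l - a O).
  replace (a O + l - a O) with l by ring. exact H.
Qed.

(* The remainder [F - sum_(j <= N) a_j] vanishes at 0 and has derivative [- Z (S N)],
   so the mean value theorem bounds it by [|x| M (S N)]. *)
Lemma is_series_of_telescoping_derivatives (a Z : nat -> R -> R) (F : R -> R) (M : nat -> R) x :
  F 0 = 0 -> (forall j, a j 0 = 0) ->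
  (forall y, Rmin 0 x <= y <= Rmax 0 x -> is_derive F y (- Z O y)) ->
  (forall j y, Rmin 0 x <= y <= Rmax 0 x -> is_derive (a j) y (Z (S j) y - Z j y)) ->
  (forall N y, Rmin 0 x <= y <= Rmax 0 x -> Rabs (Z N y) <= M N) ->
  is_lim_seq M 0 ->
  is_series (fun j => a j x) (F x).
Proof.
  intros HF0 Ha0 HF Ha HZ HM.
  set (rem := fun N y => F y - sum_n (fun j => a j y) N).
  assert (Hrem0 : forall N, rem N 0 = 0).
  { intros N. unfold rem. rewrite HF0.
    induction N as [|N IH]; [rewrite sum_O, Ha0; ring|].
    rewrite sum_Sn, Ha0. unfold plus; simpl. lra. }
  assert (Hrem' : forall N y, Rmin 0 x <= y <= Rmax 0 x -> is_derive (rem N) y (- Z (S N) y)).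
  { intros N y Hy. unfold rem.
    replace (- Z (S N) y) with (- Z O y - sum_n (fun j => Z (S j) y - Z j y) N)
      by (rewrite (sum_n_telescope (fun k => Z k y)); ring).
    apply (is_derive_minus F (fun y => sum_n (fun j => a j y) N)); [now apply HF|].
    apply (is_derive_sum_n a). intros j _. now apply Ha. }
  assert (Hbound : forall N, Rabs (rem N x) <= M (S N) * Rabs x).
  { intros N. destruct (MVT_abs (rem N) (fun y => - Z (S N) y) 0 x) as [c [Hc Hcx]].
    - intros c Hc. now apply is_derive_Reals, Hrem'.
    - rewrite Hrem0, Rminus_0_r, Rminus_0_r, Rabs_Ropp in Hc. rewrite Hc.
      apply Rmult_le_compat_r; [apply Rabs_pos | now apply HZ]. }
  assert (Hlim : is_lim_seq (fun N => rem N x) 0).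
  { apply is_lim_seq_abs_0.
    apply (is_lim_seq_le_le (fun _ => 0) _ (fun N => M (S N) * Rabs x)).
    - intros N. split; [apply Rabs_pos | apply Hbound].
    - apply is_lim_seq_const.
    - replace (Finite 0) with (Finite (0 * Rabs x)) by (f_equal; ring).
      apply is_lim_seq_mult'; [apply (is_lim_seq_incr_1 M); exact HM | apply is_lim_seq_const]. }
  change (is_lim_seq (sum_n (fun j => a j x)) (F x)).
  apply (is_lim_seq_ext (fun N => F x - rem N x)); [intros N; unfold rem; ring|].
  replace (Finite (F x)) with (Finite (F x - 0)) by (f_equal; ring).
  apply is_lim_seq_minus'; [apply is_lim_seq_const | exact Hlim].
Qed.

Lemma is_series_of_tail_weight_telescoping (a : nat -> R -> R) (F G : R -> R) x :
  -3 < x < c_const ->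
  F 0 = 0 -> (forall j, a j 0 = 0) ->
  (forall y, -3 < y < 1 -> ex_derive G y) ->
  (forall y, -3 < y < 1 -> is_derive F y (- G y)) ->
  (forall j y, -3 < y < 1 ->
     is_derive (a j) y (G y * tail_weight (S j) y - G y * tail_weight j y)) ->
  is_series (fun j => a j x) (F x).
Proof.
  intros Hx HF0 Ha0 HG HF Ha.
  pose proof c_const_lt_1.
  assert (Hsub : forall y, Rmin 0 x <= y <= Rmax 0 x -> -3 < y < 1)
    by (intros y; unfold Rmin, Rmax; destruct (Rle_dec 0 x); lra).
  destruct (continuity_ab_maj (fun y => Rabs (G y)) (Rmin 0 x) (Rmax 0 x)) as [m [HGm _]].
  { apply Rmin_Rmax. }
  { intros y Hy. apply (continuity_pt_comp G Rabs); [|apply Rcontinuity_abs].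
    apply continuity_pt_filterlim, (@ex_derive_continuous R_AbsRing R_NormedModule).
    apply HG, Hsub, Hy. }
  pose proof (abs_cube_div_lt_27_4 x Hx).
  assert (0 <= Rabs x ^ 3 / (1 - x))
    by (apply Rmult_le_pos; [apply pow_le, Rabs_pos | apply Rlt_le, Rinv_0_lt_compat; lra]).
  set (r := (Rabs x ^ 3 / (1 - x) + 27 / 4) / 2).
  apply (is_series_of_telescoping_derivatives a (fun N y => G y * tail_weight N y) F
           (fun N => Rabs (G m) * (2 * ((INR N + 1) ^ 2 * r ^ N / binom (3 * N) N)))); auto.
  - intros y Hy. rewrite tail_weight_0, Rmult_1_r. apply HF, Hsub, Hy.
  - intros N y Hy. rewrite Rabs_mult.
    apply Rmult_le_compat; [apply Rabs_pos | apply Rabs_pos | apply HGm, Hy |].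
    apply tail_weight_bound with x; [lra | unfold r; lra | exact Hy].
  - replace (Finite 0) with (Finite (Rabs (G m) * (2 * 0))) by (f_equal; ring).
    apply is_lim_seq_mult'; [apply is_lim_seq_const|].
    apply is_lim_seq_mult'; [apply is_lim_seq_const|].
    apply is_lim_seq_sq_pow_div_binom3. unfold r. lra.
Qed.

Definition rad (x : R) : R := sqrt ((1 - x) * (3 + x)).

Lemma rad_pos x : -3 < x < 1 -> 0 < rad x.
Proof. intros. apply sqrt_lt_R0. nra. Qed.

Lemma rad_sq x : -3 < x < 1 -> rad x ^ 2 = (1 - x) * (3 + x).
Proof. intros. unfold rad. rewrite pow2_sqrt; [reflexivity | nra]. Qed.

Lemma sqrt_ratio_eq_rad x : -3 < x < 1 -> sqrt ((3 + x) / (1 - x)) = rad x / (1 - x).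
Proof.
  intros Hx. pose proof (rad_pos x Hx). pose proof (rad_sq x Hx) as Hrad2.
  rewrite <- (sqrt_pow2 (rad x / (1 - x))) by (apply Rlt_le, Rdiv_lt_0_compat; lra).
  f_equal. unfold Rdiv. rewrite Rpow_mult_distr, Hrad2, pow_inv. field. lra.
Qed.

Lemma is_derive_rad x : -3 < x < 1 -> is_derive rad x (- (1 + x) / rad x).
Proof.
  intros Hx. pose proof (rad_pos x Hx).
  unfold rad at 1. auto_derive; [nra|].
  change (sqrt ((1 + - x) * (3 + x))) with (rad x). field. lra.
Qed.

Definition theta (x : R) : R := atan (sqrt ((3 + x) / (1 - x))).

Lemma is_derive_theta x : -3 < x < 1 -> is_derive theta x (/ (2 * rad x)).
Proof.
  intros Hx. pose proof (rad_pos x Hx). pose proof (rad_sq x Hx) as Hrad2.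
  unfold theta. auto_derive.
  - repeat split; [lra | apply Rdiv_lt_0_compat; lra].
  - change (sqrt ((3 + x) * / (1 + - x))) with (sqrt ((3 + x) / (1 - x))).
    rewrite sqrt_ratio_eq_rad by exact Hx.
    field_simplify_eq; [rewrite Hrad2; ring |].
    repeat split; try lra.
Qed.

Lemma sin_atan_cos s : sin (atan s) = s * cos (atan s).
Proof.
  pose proof (atan_bound s). assert (0 < cos (atan s)) by (apply cos_gt_0; lra).
  rewrite <- (tan_atan s) at 2. unfold tan. field. lra.
Qed.

Lemma sin_3_atan s : sin (3 * atan s) = (3 * s - s ^ 3) * cos (atan s) ^ 3.
Proof.
  replace (3 * atan s) with (2 * atan s + atan s) by ring.
  rewrite sin_plus, sin_2a, cos_2a, !sin_atan_cos. ring.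
Qed.

Lemma cos_3_atan s : cos (3 * atan s) = (1 - 3 * s ^ 2) * cos (atan s) ^ 3.
Proof.
  replace (3 * atan s) with (2 * atan s + atan s) by ring.
  rewrite cos_plus, sin_2a, cos_2a, !sin_atan_cos. ring.
Qed.

(* [q] is [3 theta - PI] written branchwise with [atan (tan (3 theta))]; which branch applies
   is decided by the sign of [cos (3 theta)], that is of [-(x + 2)]. *)
Lemma q_fun_theta x : -3 < x < 1 -> q_fun x = 3 * theta x - PI.
Proof.
  intros Hx.
  set (s := sqrt ((3 + x) / (1 - x))).
  assert (Hs : 0 < s) by (apply sqrt_lt_R0, Rdiv_lt_0_compat; lra).
  assert (Hs2 : s ^ 2 = (3 + x) / (1 - x)) by (apply pow2_sqrt, Rlt_le, Rdiv_lt_0_compat; lra).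
  assert (Hth : 0 < theta x < PI / 2).
  { split; [rewrite <- atan_0; apply atan_increasing, Hs | apply atan_bound]. }
  assert (Hcth : 0 < cos (theta x)) by (apply cos_gt_0; lra).
  assert (Hc : 0 < cos (theta x) ^ 3) by (apply pow_lt; lra).
  assert (Hcos3 : cos (3 * theta x) * (1 - x) = - 4 * (x + 2) * cos (theta x) ^ 3).
  { unfold theta. fold s. rewrite cos_3_atan, Hs2. field. lra. }
  assert (Htan3 : x <> -2 -> tan (3 * theta x) = x / (x + 2) * s).
  { intros Hx2. unfold tan, theta. fold s. rewrite sin_3_atan, cos_3_atan.
    change (atan s) with (theta x).
    replace (s ^ 3) with (s * s ^ 2) by ring. rewrite Hs2. field.
    repeat split; lra. }
  pose proof PI_RGT_0.
  unfold q_fun. fold s.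
  destruct (total_order_T (3 * theta x) (PI / 2)) as [[Hlt | Heq] | Hgt].
  - assert (0 < cos (3 * theta x)) by (apply cos_gt_0; lra).
    assert (x < -2) by nra.
    destruct (Rlt_dec (-2) x); [lra|]. destruct (Req_EM_T x (-2)); [lra|].
    rewrite <- Htan3, atan_tan by lra. reflexivity.
  - assert (x = -2) by (rewrite Heq, cos_PI2 in Hcos3; nra).
    destruct (Rlt_dec (-2) x); [lra|]. destruct (Req_EM_T x (-2)); lra.
  - assert (cos (3 * theta x) < 0) by (apply cos_lt_0; lra).
    assert (-2 < x) by nra.
    destruct (Rlt_dec (-2) x); [|lra].
    rewrite <- Htan3 by lra.
    replace (tan (3 * theta x)) with (tan (3 * theta x - PI)).
    + apply atan_tan. lra.
    + unfold tan. rewrite sin_minus, cos_minus, sin_PI, cos_PI. field. lra.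
Qed.

(* With [c(x) = 8 x^2 (x - 1) / ((x + 3)^2 rad x)], the summand of index [j + 1] in (i) is
   [c(x) * atan_term j x]; [atan_term], [atan_weight], [atan_limit] are the [g_j], [G], [F]
   of the telescoping argument. *)
Definition atan_term (j : nat) (y : R) : R :=
  rad y * (((2 * y - 3) ^ 2 * (INR j + 1) + 2 * y ^ 2 + 2 * y - 3) * (y + 3) ^ 2)
  * pow_ratio (S (3 * j)) (S (S j)) y / (8 * binom (3 * S j) (S j)).

Definition atan_weight (y : R) : R := rad y * (y + 3) * (2 * y - 3) / (4 * (y - 1) ^ 2).

Definition atan_limit (y : R) : R := - y * (y + 7) * rad y / (4 * (y - 1)) + (3 * theta y - PI).

Lemma is_derive_atan_limit y : -3 < y < 1 -> is_derive atan_limit y (- atan_weight y).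
Proof.
  intros Hy. pose proof (rad_pos y Hy). pose proof (rad_sq y Hy) as Hrad2.
  pose proof (is_derive_rad y Hy) as Hr. pose proof (is_derive_theta y Hy) as Ht.
  unfold atan_limit. auto_derive.
  - repeat split; [eexists; exact Hr | lra | eexists; exact Ht].
  - erewrite !is_derive_unique by eassumption. unfold atan_weight.
    field_simplify_eq; [rewrite Hrad2; ring | split; lra].
Qed.

Lemma is_derive_atan_term j y :
  -3 < y < 1 ->
  is_derive (atan_term j) y (atan_weight y * tail_weight (S j) y - atan_weight y * tail_weight j y).
Proof.
  intros Hy. pose proof (rad_pos y Hy). pose proof (rad_sq y Hy) as Hrad2.
  pose proof (binom_pos (3 * j) j). pose proof (pos_INR j).
  pose proof (is_derive_rad y Hy) as Hr.
  pose proof (is_derive_pow_ratio (3 * j) (S j) y ltac:(lra)) as Hp.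
  unfold atan_term.
  set (p := pow_ratio (S (3 * j)) (S (S j))) in *. set (B := binom (3 * S j) (S j)).
  auto_derive.
  - repeat split; eexists; eassumption.
  - erewrite !is_derive_unique by eassumption.
    unfold p, B, atan_weight, tail_weight, pow_ratio. rewrite !binom_3k_succ.
    rewrite Nat.mul_succ_r, pow_add, <- !tech_pow_Rmult, !S_INR, mult_INR. simpl (INR 3).
    assert ((y - 1) ^ j <> 0) by (apply pow_nonzero; lra).
    field_simplify_eq; [rewrite Hrad2; ring | repeat split; lra].
Qed.

Lemma atan_limit_0 : atan_limit 0 = 0.
Proof.
  unfold atan_limit. rewrite <- (q_fun_theta 0) by lra. unfold q_fun.
  destruct (Rlt_dec (-2) 0) as [_ | ]; [|lra].
  replace (0 / (0 + 2) * sqrt ((3 + 0) / (1 - 0))) with 0 by field.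
  rewrite atan_0. field.
Qed.

Lemma is_series_atan_identity x :
  -3 < x < c_const ->
  is_series
    (fun n : nat => let k := S n in
       (((2 * x - 3) ^ 2 * INR k + 2 * x ^ 2 + 2 * x - 3) * x ^ (3 * k))
       / ((x - 1) ^ k * binom (3 * k) k))
    (- 2 * x ^ 3 * (x + 7) / (x + 3) ^ 2
     + 8 * x ^ 2 * (x - 1) * q_fun x / ((x + 3) ^ 2 * sqrt ((1 - x) * (3 + x)))).
Proof.
  intros Hx. pose proof c_const_lt_1. assert (Hx1 : -3 < x < 1) by lra.
  pose proof (rad_pos x Hx1).
  apply (is_series_scal_ext _ (fun j => atan_term j x)
           (8 * x ^ 2 * (x - 1) / ((x + 3) ^ 2 * rad x)) (atan_limit x)).
  - unfold atan_limit. rewrite (q_fun_theta x Hx1). fold (rad x).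
    field. repeat split; lra.
  - intros j. cbv zeta. unfold atan_term, pow_ratio.
    rewrite S_INR, (Nat.mul_succ_r 3 j), pow_add, <- !tech_pow_Rmult.
    pose proof (binom_pos (3 * j + 3) (S j)).
    assert ((x - 1) ^ j <> 0) by (apply pow_nonzero; lra).
    field. repeat split; lra.
  - apply (is_series_of_tail_weight_telescoping atan_term atan_limit atan_weight x Hx).
    + exact atan_limit_0.
    + intros j. unfold atan_term, pow_ratio. rewrite (pow_i (S (3 * j))) by lia.
      unfold Rdiv. ring.
    + intros y Hy. pose proof (is_derive_rad y Hy). unfold atan_weight.
      auto_derive. repeat split; [eexists; eassumption | apply Rgt_not_eq; nra].
    + exact is_derive_atan_limit.
    + exact is_derive_atan_term.
Qed.

(* Same scheme for (ii), with [c(x) = 12 x^2 (1 - x)] and the summand [t(x)] of index 0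
   split off. *)
Definition log_term (j : nat) (y : R) : R :=
  (s_fun y * (INR j + 1) + t_fun y) * pow_ratio (S (3 * j)) (S j) y
  / (12 * (1 - y) * binom (3 * S j) (S j)).

Definition log_weight (y : R) : R := - (2 * y - 3) * (y ^ 2 - 12 * y + 9) / (6 * (y - 1) ^ 2).

Definition log_limit (y : R) : R := ln (1 - y) - y * (y ^ 2 - 24 * y + 21) / (6 * (1 - y)).

Lemma is_derive_log_limit y : y < 1 -> is_derive log_limit y (- log_weight y).
Proof.
  intros Hy. unfold log_limit, log_weight. auto_derive.
  - repeat split; lra.
  - field. lra.
Qed.

Lemma is_derive_log_term j y :
  y < 1 ->
  is_derive (log_term j) y (log_weight y * tail_weight (S j) y - log_weight y * tail_weight j y).
Proof.
  intros Hy. pose proof (binom_pos (3 * j) j).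
  pose proof (is_derive_pow_ratio (3 * j) j y ltac:(lra)) as Hp.
  unfold log_term, s_fun, t_fun.
  set (p := pow_ratio (S (3 * j)) (S j)) in *. set (B := binom (3 * S j) (S j)).
  auto_derive.
  - repeat split; [eexists; exact Hp |].
    apply Rmult_integral_contrapositive_currified; [lra | apply Rgt_not_eq, binom_pos].
  - erewrite is_derive_unique by exact Hp.
    unfold p, B, log_weight, tail_weight, pow_ratio. rewrite !binom_3k_succ.
    rewrite Nat.mul_succ_r, pow_add, <- !tech_pow_Rmult, !S_INR, mult_INR. simpl (INR 3).
    assert ((y - 1) ^ j <> 0) by (apply pow_nonzero; lra).
    pose proof (pos_INR j).
    field. repeat split; lra.
Qed.

Lemma is_series_log_identity x :
  -3 < x < c_const ->
  is_series
    (fun k : nat => ((s_fun x * INR k + t_fun x) * x ^ (3 * k)) / ((x - 1) ^ k * binom (3 * k) k))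
    (12 * x ^ 2 * (1 - x) * ln (1 - x) - 27 * (1 - x) * (x ^ 2 - 6 * x + 3)).
Proof.
  intros Hx. pose proof c_const_lt_1.
  apply (is_series_cons _ (12 * x ^ 2 * (1 - x) * log_limit x)).
  - unfold log_limit, t_fun, binom, Binomial.C. simpl. field. lra.
  - apply (is_series_scal_ext _ (fun j => log_term j x) (12 * x ^ 2 * (1 - x)) (log_limit x));
      [reflexivity | |].
    + intros j. unfold log_term, pow_ratio.
      rewrite S_INR, (Nat.mul_succ_r 3 j), pow_add, <- !tech_pow_Rmult.
      pose proof (binom_pos (3 * j + 3) (S j)).
      assert ((x - 1) ^ j <> 0) by (apply pow_nonzero; lra).
      field. repeat split; lra.
    + apply (is_series_of_tail_weight_telescoping log_term log_limit log_weight x Hx).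
      * unfold log_limit. rewrite Rminus_0_r, ln_1. field.
      * intros j. unfold log_term, pow_ratio. rewrite (pow_i (S (3 * j))) by lia.
        unfold Rdiv. ring.
      * intros y Hy. unfold log_weight. auto_derive. apply Rgt_not_eq. nra.
      * intros y Hy. apply is_derive_log_limit. lra.
      * intros j y Hy. apply is_derive_log_term. lra.
Qed.

Theorem theorem1p1 (x : R) (hx1 : -3 < x) (hx2 : x < c_const) :
  is_series
    (fun n : nat => let k := S n in
       (((2 * x - 3) ^ 2 * INR k + 2 * x ^ 2 + 2 * x - 3) * x ^ (3 * k))
       / ((x - 1) ^ k * binom (3 * k) k))
    (- 2 * x ^ 3 * (x + 7) / (x + 3) ^ 2
     + 8 * x ^ 2 * (x - 1) * q_fun x / ((x + 3) ^ 2 * sqrt ((1 - x) * (3 + x))))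
  /\
  is_series
    (fun k : nat =>
       ((s_fun x * INR k + t_fun x) * x ^ (3 * k))
       / ((x - 1) ^ k * binom (3 * k) k))
    (12 * x ^ 2 * (1 - x) * ln (1 - x) - 27 * (1 - x) * (x ^ 2 - 6 * x + 3)).
Proof.
  split; [apply is_series_atan_identity | apply is_series_log_identity]; lra.
Qed.
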